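(* Let $x$ be an element of a commutative ring $R$ and $U$ a variable. The maps $f_0:R[U^{-1}]\to R$, $\sum_{i=0}^nr_iU^{-i}\mapsto r_0$, and $f_1:R[U^{-1}]\to R_x$, $f(U^{-1})\mapsto f(x^{-1})/x$, define a morphism of complexes from $K^\bullet(x-U;R[U^{-1}]):0\to R[U^{-1}]\xrightarrow{x-U}R[U^{-1}]\to0$ to $\check{C}_x:0\to R\xrightarrow{\iota_x}R_x\to0$, and this morphism is a quasi-isomorphism.
   Context: $R[U^{-1}]$ is the module of inverse polynomials: the free $R$-module with basis $U^{-i}$, $i\ge0$, which is an $R[U]$-module via $U^j\cdot U^{-i}=U^{j-i}$ if $j\le i$ and $=0$ if $j>i$. Both complexes are in cohomological degrees $0,1$; $\iota_x(r)=r/1$. *)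

From HB Require Import structures.
From mathcomp Require Import all_boot all_order all_algebra.
Set Implicit Arguments. Unset Strict Implicit. Unset Printing Implicit Defensive.
Import Order.TTheory GRing.Theory Num.Theory.
Local Open Scope ring_scope.

Section Defs.
Variable R : comNzRingType.

(* R[U^{-1}]: an element sum_i r_i U^{-i} is represented by the polynomial
   p : {poly R} with p`_i = r_i (a polynomial in the variable V = U^{-1}). *)
Definition invpoly := {poly R}.

(* The action of U:  U * U^{-i} = U^{-(i-1)} for i >= 1, and U * U^0 = 0. *)
Definition Uact (p : invpoly) : invpoly := drop_poly 1 p.

Definition dK (x : R) (p : invpoly) : invpoly := x *: p - Uact p.

(* The localization R_x, presented as fractions a / x^n, i.e. pairs (a, n),
   with the usual equality of fractions. *)
Definition locR := (R * nat)%type.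
Definition loc_eq (x : R) (a b : locR) : Prop :=
  exists k : nat, x ^+ k * (a.1 * x ^+ b.2 - b.1 * x ^+ a.2) = 0.
Definition loc_add (x : R) (a b : locR) : locR :=
  (a.1 * x ^+ b.2 + b.1 * x ^+ a.2, (a.2 + b.2)%N).
Definition loc_scale (r : R) (a : locR) : locR := (r * a.1, a.2).
Definition loc0 : locR := (0, 0%N).

Definition iotax (r : R) : locR := (r, 0%N).

Definition f0 (p : invpoly) : R := p`_0.

(* f_1 : f(U^{-1}) |-> f(x^{-1})/x = sum_{i<n} r_i x^{-i-1}
       = (sum_{i<n} r_i x^{n-i}) / x^{n+1},  n = size p. *)
Definition f1 (x : R) (p : invpoly) : locR :=
  (\sum_(i < size p) p`_i * x ^+ (size p - i), (size p).+1).
End Defs.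

From HB Require Import structures.
From mathcomp Require Import all_boot all_order all_algebra.
From mathcomp Require Import ring.
Import GRing.Theory.
Set Implicit Arguments.
Unset Strict Implicit.
Unset Printing Implicit Defensive.
Local Open Scope ring_scope.

(* The numerator of f_1 p can be computed with any bound N >= size p in place of
   size p: this rescales numerator and denominator by the same power of x, so every
   identity in R_x can be checked over a common denominator.
   On coefficients x - U is q |-> (x q_i - q_(i+1)).  Its kernel consists of the
   geometric sequences r x^i, which are polynomials exactly when x^k r = 0 for some k,
   i.e. when r/1 = 0 in R_x.  Conversely p = (x - U) q is solved by q_0 = r,
   q_(i+1) = x q_i - p_i, and f_1 p = r/1 is exactly what makes this sequence vanish
   eventually. *)

Section KoszulCech.
Variables (R : comNzRingType) (x : R).

Lemma loc_eq_refl a : loc_eq x a a.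
Proof. by exists 0%N; rewrite subrr mulr0. Qed.

Lemma loc_eq_sym a b : loc_eq x a b -> loc_eq x b a.
Proof. by case=> k hk; exists k; rewrite -opprB mulrN hk oppr0. Qed.

Lemma loc_eq_trans b a c : loc_eq x a b -> loc_eq x b c -> loc_eq x a c.
Proof.
case=> k hk [j hj]; exists (k + j + b.2)%N.
transitivity (x ^+ j * x ^+ c.2 * (x ^+ k * (a.1 * x ^+ b.2 - b.1 * x ^+ a.2))
  + x ^+ k * x ^+ a.2 * (x ^+ j * (b.1 * x ^+ c.2 - c.1 * x ^+ b.2))).
  by rewrite !exprD; ring.
by rewrite hk hj !mulr0 addr0.
Qed.

Lemma loc_eq_mulX (a : R) n k : loc_eq x (x ^+ k * a, (n + k)%N) (a, n).
Proof. by exists 0%N; rewrite /= exprD; ring. Qed.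

Lemma loc_addr0 a : loc_eq x (loc_add x a (iotax 0)) a.
Proof. by exists 0%N; rewrite /= addn0 mul0r addr0 mulr1 subrr mulr0. Qed.

Lemma coef_dK (p : invpoly R) i : (dK x p)`_i = x * p`_i - p`_i.+1.
Proof. by rewrite /dK /Uact coefB coefZ coef_drop_poly addn1. Qed.

Lemma size_dK (p : invpoly R) : (size (dK x p) <= size p)%N.
Proof.
apply: leq_trans (size_polyD _ _) _; rewrite geq_max size_scale_leq.
by rewrite size_polyN /Uact size_drop_poly leq_subr.
Qed.

Definition f1num (N : nat) (p : invpoly R) : R := \sum_(i < N) p`_i * x ^+ (N - i).

Lemma f1numS (p : invpoly R) N : f1num N.+1 p = x * f1num N p + p`_N * x.
Proof.
rewrite /f1num big_ord_recr /= subSnn expr1 mulr_sumr; congr (_ + _).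
by apply: eq_bigr => i _; rewrite subSn ?(ltnW (ltn_ord i)) // exprS; ring.
Qed.

Lemma f1num_pad (p : invpoly R) N k :
  (size p <= N)%N -> f1num (N + k) p = x ^+ k * f1num N p.
Proof.
move=> hN; elim: k => [|k IH]; first by rewrite addn0 expr0 mul1r.
rewrite addnS f1numS IH nth_default ?(leq_trans hN (leq_addr _ _)) //.
by rewrite exprS; ring.
Qed.

Lemma f1num_linear a (p q : invpoly R) N :
  f1num N (a *: p + q) = a * f1num N p + f1num N q.
Proof.
rewrite /f1num mulr_sumr -big_split /=; apply: eq_bigr => i _.
by rewrite coefD coefZ; ring.
Qed.

Lemma f1E (p : invpoly R) N : (size p <= N)%N -> loc_eq x (f1 x p) (f1num N p, N.+1).
Proof.
move=> hN; rewrite -(subnKC hN) f1num_pad //; apply: loc_eq_sym.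
by rewrite -addSn; apply: loc_eq_mulX.
Qed.

Lemma f1_linear a (p q : invpoly R) :
  loc_eq x (f1 x (a *: p + q)) (loc_add x (loc_scale a (f1 x p)) (f1 x q)).
Proof.
set n := size p; set m := size q.
have hs : (size (a *: p + q)%R <= n + m.+1)%N.
  apply: leq_trans (size_polyD _ _) _; rewrite geq_max.
  rewrite (leq_trans (size_scale_leq _ _)) ?leq_addr //.
  by rewrite (leq_trans (leqnSn m)) ?leq_addl.
apply: loc_eq_trans (f1E hs) _.
rewrite f1num_linear f1num_pad // (_ : (n + m.+1 = m + n.+1)%N) ?f1num_pad //;
  last by rewrite !addnS addnC.
rewrite /loc_add /loc_scale /f1 -/n -/m -/(f1num n p) -/(f1num m q) /=.
rewrite (_ : (m + n.+1).+1 = n.+1 + m.+1)%N; last by rewrite addnC addnS.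
by rewrite mulrCA !(mulrC (x ^+ _)); apply: loc_eq_refl.
Qed.

Lemma f1num_dK (p : invpoly R) N :
  (size p <= N)%N -> f1num N (dK x p) = p`_0 * x ^+ N.+1.
Proof.
move=> hN; have hS := f1num_pad 1 hN.
rewrite addn1 expr1 /f1num big_ord_recl subn0 /= in hS.
rewrite /f1num (eq_bigr (fun i : 'I_N =>
  x * (p`_i * x ^+ (N - i)) - p`_i.+1 * x ^+ (N - i))); last by move=> i _; rewrite coef_dK; ring.
by rewrite sumrB -mulr_sumr -hS addrK.
Qed.

Lemma f1_dK (p : invpoly R) : loc_eq x (f1 x (dK x p)) (iotax (f0 p)).
Proof.
apply: loc_eq_trans (f1E (size_dK p)) _.
by rewrite f1num_dK // mulrC; apply: (loc_eq_mulX _ 0).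
Qed.

Lemma dK_eq0_coef (p : invpoly R) i : dK x p = 0 -> p`_i = p`_0 * x ^+ i.
Proof.
move=> hp; elim: i => [|i IH]; first by rewrite mulr1.
have /eqP := congr1 (fun q : invpoly R => q`_i) hp.
by rewrite coef_dK coef0 subr_eq0 => /eqP <-; rewrite IH exprS; ring.
Qed.

Lemma dK_geometric (r : R) k :
  x ^+ k * r = 0 -> dK x (\poly_(i < k.+1) (r * x ^+ i)) = 0.
Proof.
move=> hk; apply/polyP => i; rewrite coef_dK !coef_poly coef0.
case: (ltngtP i.+1 k.+1) => [h | h | [->]].
- by rewrite exprS; ring.
- by rewrite mulr0 subr0.
- by rewrite subr0 [r * _]mulrC hk mulr0.
Qed.

Lemma f1_scale_Xn (b : R) n : loc_eq x (f1 x (b *: 'X^n)) (b, n.+1).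
Proof.
have hs : (size (b *: 'X^n : invpoly R)%R <= n.+1)%N.
  by rewrite (leq_trans (size_scale_leq _ _)) // size_polyXn.
apply: loc_eq_trans (f1E hs) _.
rewrite /f1num big_ord_recr /= big1 => [|i _]; last first.
  by rewrite coefZ coefXn (ltn_eqF (ltn_ord i)) mulr0 mul0r.
rewrite coefZ coefXn eqxx mulr1 subSnn add0r mulrC -(addn1 n.+1).
exact: loc_eq_mulX.
Qed.

Section Antiderivative.
Variables (p : invpoly R) (r : R).

Fixpoint dK_lift (i : nat) : R :=
  if i is i'.+1 then x * dK_lift i' - p`_i' else r.

Lemma dK_liftE i : x * dK_lift i = x ^+ i.+1 * r - f1num i p.
Proof.
elim: i => [|i IH] /=; first by rewrite /f1num big_ord0 subr0 expr1.
by rewrite mulrBr IH f1numS !exprS; ring.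
Qed.

Lemma dK_lift_tail i m : (size p <= i)%N -> dK_lift (i + m) = x ^+ m * dK_lift i.
Proof.
move=> hi; elim: m => [|m IH]; first by rewrite addn0 expr0 mul1r.
rewrite addnS /= IH nth_default ?(leq_trans hi (leq_addr _ _)) // exprS.
by rewrite subr0 mulrA.
Qed.

Lemma dK_lift_eq0 k i :
  x ^+ k * (f1num (size p) p - r * x ^+ (size p).+1) = 0 ->
  (size p + k.+1 <= i)%N -> dK_lift i = 0.
Proof.
move=> hk /subnKC <-; rewrite -addnA dK_lift_tail // addSnnS addnC exprD exprSr.
by rewrite -!mulrA [x * _]mulrCA dK_liftE [_ * r]mulrC -opprB mulrN hk oppr0 !mulr0.
Qed.

End Antiderivative.

Lemma f1_eq_iotax_dK (p : invpoly R) (r : R) :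
  loc_eq x (f1 x p) (iotax r) -> exists q : invpoly R, p = dK x q.
Proof.
case=> k hk; rewrite /f1 /iotax /= expr0 mulr1 -/(f1num _ p) in hk.
have hz := dK_lift_eq0 hk.
exists (\poly_(i < size p + k.+1) dK_lift p r i).
have coef_q i : (\poly_(i < size p + k.+1) dK_lift p r i)`_i = dK_lift p r i.
  by rewrite coef_poly; case: ltnP => // /hz ->.
by apply/polyP => i; rewrite coef_dK !coef_q /=; ring.
Qed.

End KoszulCech.

Theorem lemma6p6 (R : comNzRingType) (x : R) :
  (* f_0 and f_1 are R-linear *)
  (forall (a : R) (p q : invpoly R), f0 (a *: p + q) = a * f0 p + f0 q) /\
  (forall (a : R) (p q : invpoly R),
      loc_eq x (f1 x (a *: p + q)) (loc_add x (loc_scale a (f1 x p)) (f1 x q))) /\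
  (* morphism of complexes: f_1 o (x - U) = iota_x o f_0 *)
  (forall p : invpoly R, loc_eq x (f1 x (dK x p)) (iotax (f0 p))) /\
  (* quasi-isomorphism, H^0: the induced map ker(x-U) -> ker(iota_x) is bijective *)
  (forall p : invpoly R, dK x p = 0 -> f0 p = 0 -> p = 0) /\
  (forall r : R, loc_eq x (iotax r) (loc0 R) -> exists p : invpoly R, dK x p = 0 /\ f0 p = r) /\
  (* quasi-isomorphism, H^1: the induced map
     coker(x-U) -> R_x / iota_x(R) is bijective *)
  (forall a : locR R, exists (p : invpoly R) (r : R),
      loc_eq x a (loc_add x (f1 x p) (iotax r))) /\
  (forall (p : invpoly R) (r : R),
      loc_eq x (f1 x p) (iotax r) -> exists q : invpoly R, p = dK x q).
Proof.
split; first by move=> a p q; rewrite /f0 coefD coefZ.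
split; first exact: f1_linear.
split; first exact: f1_dK.
split.
  move=> p hp h0; apply/polyP => i.
  by rewrite (dK_eq0_coef i hp) -/(f0 p) h0 mul0r coef0.
split.
  move=> r [k]; rewrite /= expr0 mulr1 mul0r subr0 => hk.
  exists (\poly_(i < k.+1) (r * x ^+ i)); split; first exact: dK_geometric.
  by rewrite /f0 coef_poly /= expr0 mulr1.
split; last exact: f1_eq_iotax_dK.
move=> [b n]; exists ((b * x) *: 'X^n), 0.
apply: loc_eq_sym; apply: loc_eq_trans (loc_addr0 x _) _.
apply: loc_eq_trans (f1_scale_Xn x _ _) _.
by have := loc_eq_mulX x b n 1; rewrite expr1 addn1 [x * b]mulrC.
Qed.
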